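(* Let $t\geq 1$, $l\geq 1$, and let $C_1,\ldots,C_l$ be fans with $C_i=\{a_{i,1},\ldots,a_{i,m}\}$, simultaneously grounded by a curve $\gamma=\gamma_1\cup\cdots\cup\gamma_m$. If each $a_{i,j}$ intersects $\gamma$ in at most $t$ points, then there are indices $j_1<\cdots<j_r$ with $r=\lfloor\log^{(2l)}_{t+1}m\rfloor$ (the $2l$-times iterated base-$(t+1)$ logarithm) and a subcurve $\gamma'=\gamma'_1\cup\cdots\cup\gamma'_r\subseteq\gamma$ such that (1) the subfans $C'_i=\{a_{i,j_1},\ldots,a_{i,j_r}\}\subseteq C_i$, $1\leq i\leq l$, are simultaneously well-grounded by $\gamma'_1\cup\cdots\cup\gamma'_r$, and (2) $\gamma'_s\supseteq\gamma_{j_s}$ for $1\leq s\leq r$.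
   Context: All curves are simple; no two curves are tangent (a shared interior point is a proper crossing). A fan with apex $v$ is a collection of curves with common endpoint $v$. Let $\gamma$ be a curve with endpoints $p,q$, partitioned into subcurves $\gamma_1,\ldots,\gamma_m$ appearing in this order along $\gamma$ from $p$ to $q$ (consecutive pieces sharing an endpoint). A fan $C=\{a_1,\ldots,a_m\}$ with apex $v$ is grounded by $\gamma_1\cup\cdots\cup\gamma_m$ if $v\notin\gamma$ and each $a_i$ has its other endpoint on $\gamma_i$; well-grounded if in addition each $a_i$ intersects $\gamma$ only within $\gamma_i$. Several fans are simultaneously (well-)grounded by $\gamma_1\cup\cdots\cup\gamma_m$ if each is (well-)grounded with respect to the same partition. *)

From Stdlib Require Import Reals Lra Lia List ZArith.
Open Scope R_scope.

(* A (parametrized) curve; the curve itself is its image of [0,1]. *)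
Definition curve := R -> R * R.

Definition curve_pts (c : curve) (a b : R) : R * R -> Prop :=
  fun x => exists s, a <= s <= b /\ c s = x.

(* Simple curve: continuous (extended to all of R; any continuous map on
   [0,1] extends) and injective on [0,1]. Endpoints are c 0 and c 1. *)
Definition simple_curve (c : curve) : Prop :=
  continuity (fun s => fst (c s)) /\ continuity (fun s => snd (c s)) /\
  (forall s1 s2, 0 <= s1 <= 1 -> 0 <= s2 <= 1 -> c s1 = c s2 -> s1 = s2).

(* Parameters s 0 < s 1 < ... < s m : the k-th piece (0-based) of the
   partitioned curve g is g([s k, s (k+1)]); the whole curve is g([s 0, s m]). *)
Definition increasing_params (m : nat) (s : nat -> R) : Prop :=
  forall k, (k < m)%nat -> s k < s (S k).

Definition piece (g : curve) (s : nat -> R) (k : nat) : R * R -> Prop :=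
  curve_pts g (s k) (s (S k)).

(* Fan with apex v: curves a 0 .. a (m-1), each simple, with endpoint
   a j 0 = v (the "other endpoint" is a j 1). *)
Definition is_fan (v : R * R) (m : nat) (a : nat -> curve) : Prop :=
  forall j, (j < m)%nat -> simple_curve (a j) /\ a j 0 = v.

Definition grounded (g : curve) (s : nat -> R) (m : nat)
  (v : R * R) (a : nat -> curve) : Prop :=
  ~ curve_pts g (s 0%nat) (s m) v /\
  forall j, (j < m)%nat -> piece g s j (a j 1).

Definition well_grounded (g : curve) (s : nat -> R) (m : nat)
  (v : R * R) (a : nat -> curve) : Prop :=
  grounded g s m v a /\
  forall j, (j < m)%nat -> forall x,
    curve_pts (a j) 0 1 x -> curve_pts g (s 0%nat) (s m) x -> piece g s j x.

Definition logb (b x : R) : R := ln x / ln b.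
Definition iter_log (b : R) (k : nat) (x : R) : R := Nat.iter k (logb b) x.

(* floor as a nat (negative values give 0) *)
Definition floor_nat (x : R) : nat := Z.to_nat (Int_part x).

From Stdlib Require Import Reals Lra Lia List ZArith Classical.
Open Scope R_scope.

(* Everything is transported to the parameter interval [0,1] of the simple
   curve g: the trace of a curve c on g is the set of parameters p with g p on
   c.  Each trace of a_{i,j} has at most t elements (g is injective) and, by
   groundedness, one of them lies in the j-th parameter interval [s j, s (j+1)].

   A "coarsening" selects N of the n intervals of a partition u and encloses
   the k-th selected one in the k-th interval of a new partition w.  The core
   combinatorial fact (clear_right) is that from (t+1)^N intervals one can
   select N so that no trace point of a selected interval lies to the right of
   its new interval: keep interval 0, discard its <= t-1 other trace points by
   pigeonhole among t blocks of (t+1)^(N-1) intervals, and recurse into a free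
   block.  Mirroring gives the left-hand version; both together give a
   two-sided separation at the cost of a double exponential (clear_both).
   Coarsening preserves separation, so the l fans are handled one after the
   other (separate_fans), which costs 2l exponentials; inverting this tower
   with iterated logarithms yields r, and the theorem is a translation back
   from parameters to curves. *)

Lemma params_le {n : nat} {u : nat -> R} :
  increasing_params n u -> forall i j, (i <= j)%nat -> (j <= n)%nat -> u i <= u j.
Proof.
  intros Hu i j Hij Hjn. induction Hij as [|j Hij IH].
  - lra.
  - assert (u j < u (S j)) by (apply Hu; lia).
    assert (u i <= u j) by (apply IH; lia). lra.
Qed.

Lemma increasing_window {n : nat} {u : nat -> R} {B K : nat} :
  increasing_params n u -> (B + K <= n)%nat ->
  increasing_params K (fun k => u (B + k)%nat).
Proof. intros Hu HBK k Hk. rewrite Nat.add_succ_r. apply Hu. lia. Qed.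

Lemma free_slot (q : nat) (I : nat -> R -> Prop) (L : list R) :
  (forall b b' x, I b x -> I b' x -> b = b') -> (length L <= q)%nat ->
  exists b, (b <= q)%nat /\ forall x, In x L -> ~ I b x.
Proof.
  revert I L. induction q as [|q IH]; intros I L Hdisj HL.
  - destruct L; [|simpl in HL; lia].
    exists 0%nat. split; [lia | intros x []].
  - destruct (classic (exists x, In x L /\ I 0%nat x)) as [[x [Hx HIx]]|Hnone].
    + (* x occupies slot 0: look for a free slot among the others *)
      destruct (IH (fun b => I (S b)) (remove Req_EM_T x L)) as [b [Hb Hfree]].
      * intros b b' y H1 H2. specialize (Hdisj _ _ _ H1 H2). lia.
      * pose proof (remove_length_lt Req_EM_T L x Hx). lia.
      * exists (S b). split; [lia|]. intros y Hy HIy.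
        destruct (Req_EM_T y x) as [->|Hne].
        -- specialize (Hdisj _ _ _ HIx HIy). lia.
        -- exact (Hfree y (in_in_remove Req_EM_T L Hne Hy) HIy).
    + exists 0%nat. split; [lia|]. intros x Hx HIx. apply Hnone. eauto.
Qed.

Definition slot (u : nat -> R) (B0 K b : nat) (x : R) : Prop :=
  u (B0 + b * K)%nat < x <= u (B0 + b * K + K)%nat.

Lemma slots_disjoint {n : nat} {u : nat -> R} {B0 K q : nat} :
  increasing_params n u -> (B0 + S q * K <= n)%nat ->
  forall b b' x, (b <= q)%nat -> (b' <= q)%nat ->
  slot u B0 K b x -> slot u B0 K b' x -> b = b'.
Proof.
  intros Hu Hn.
  assert (Hord : forall b b' x, (b < b')%nat -> (b' <= q)%nat ->
                   slot u B0 K b x -> slot u B0 K b' x -> False).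
  { intros b b' x Hbb' Hb' [_ Hx] [Hx' _].
    assert (u (B0 + b * K + K)%nat <= u (B0 + b' * K)%nat)
      by (apply (params_le Hu); nia).
    lra. }
  intros b b' x Hb Hb' Hx Hx'.
  destruct (lt_eq_lt_dec b b') as [[Hlt|Heq]|Hgt]; auto.
  - destruct (Hord b b' x Hlt Hb' Hx Hx').
  - destruct (Hord b' b x Hgt Hb Hx' Hx).
Qed.

Record grounded_sets (t n : nat) (u : nat -> R) (Q : nat -> R -> Prop) : Prop := {
  gs_finite : forall k, (k < n)%nat ->
    exists L : list R, (length L <= t)%nat /\ forall p, Q k p -> In p L;
  gs_anchor : forall k, (k < n)%nat -> exists e, Q k e /\ u k <= e <= u (S k) }.

Record coarsening (n : nat) (u : nat -> R) (N : nat) (sg : nat -> nat)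
  (w : nat -> R) : Prop := {
  crs_index : forall k, (k < N)%nat -> (sg k < n)%nat;
  crs_first : u 0%nat <= w 0%nat;
  crs_last : w N <= u n;
  crs_incr : increasing_params N w;
  crs_left : forall k, (k < N)%nat -> w k <= u (sg k);
  crs_right : forall k, (k < N)%nat -> u (S (sg k)) <= w (S k) }.

Arguments gs_finite {t n u Q} _ _ _.
Arguments gs_anchor {t n u Q} _ _ _.
Arguments crs_index {n u N sg w} _ _ _.
Arguments crs_first {n u N sg w} _.
Arguments crs_last {n u N sg w} _.
Arguments crs_incr {n u N sg w} _ _ _.
Arguments crs_left {n u N sg w} _ _ _.
Arguments crs_right {n u N sg w} _ _ _.

Lemma grounded_sets_window {t n : nat} {u : nat -> R} {Q : nat -> R -> Prop} {B K : nat} :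
  grounded_sets t n u Q -> (B + K <= n)%nat ->
  grounded_sets t K (fun k => u (B + k)%nat) (fun k => Q (B + k)%nat).
Proof.
  intros HQ HBK. split.
  - intros k Hk. apply (gs_finite HQ). lia.
  - intros k Hk. rewrite Nat.add_succ_r. apply (gs_anchor HQ). lia.
Qed.

Lemma coarsening_prefix {n r : nat} {u : nat -> R} :
  (r <= n)%nat -> increasing_params n u -> coarsening n u r (fun k => k) u.
Proof.
  intros Hr Hu. split; intros; try lra; try lia.
  - apply (params_le Hu); lia.
  - intros k Hk. apply Hu. lia.
Qed.

Lemma coarsening_nil {n : nat} {u : nat -> R} (sg : nat -> nat) :
  increasing_params n u -> coarsening n u 0 sg (fun _ => u 0%nat).
Proof.
  intros Hu. split; intros; try lra; try (exfalso; lia).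
  - apply (params_le Hu); lia.
  - intros k Hk. lia.
Qed.

Lemma coarsening_trans {m : nat} {s : nat -> R} {n : nat} {J : nat -> nat}
  {u : nat -> R} {N : nat} {sg : nat -> nat} {w : nat -> R} :
  coarsening m s n J u -> coarsening n u N sg w ->
  coarsening m s N (fun k => J (sg k)) w.
Proof.
  intros H1 H2. pose proof (crs_first H1). pose proof (crs_last H1).
  pose proof (crs_first H2). pose proof (crs_last H2).
  split; try lra.
  - intros k Hk. exact (crs_index H1 _ (crs_index H2 k Hk)).
  - exact (crs_incr H2).
  - intros k Hk. pose proof (crs_left H2 k Hk).
    pose proof (crs_left H1 _ (crs_index H2 k Hk)). lra.
  - intros k Hk. pose proof (crs_right H2 k Hk).
    pose proof (crs_right H1 _ (crs_index H2 k Hk)). lra.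
Qed.

Lemma coarsening_index_increasing {n : nat} {u : nat -> R} {N : nat}
  {sg : nat -> nat} {w : nat -> R} :
  increasing_params n u -> coarsening n u N sg w ->
  forall k, (S k < N)%nat -> (sg k < sg (S k))%nat.
Proof.
  intros Hu Hc k Hk.
  pose proof (crs_index Hc k ltac:(lia)) as Hk0.
  pose proof (crs_index Hc (S k) Hk) as Hk1.
  destruct (Nat.lt_ge_cases (sg k) (sg (S k))) as [|Hge]; auto. exfalso.
  assert (u (sg (S k)) <= u (sg k)) by (apply (params_le Hu); lia).
  assert (u (sg k) < u (S (sg k))) by (apply Hu; exact Hk0).
  pose proof (crs_right Hc k ltac:(lia)). pose proof (crs_left Hc (S k) Hk).
  lra.
Qed.

(* Trace sets survive coarsening, as the chosen intervals only grow. *)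
Lemma grounded_sets_coarsen {t n : nat} {u : nat -> R} {Q : nat -> R -> Prop}
  {N : nat} {sg : nat -> nat} {w : nat -> R} :
  grounded_sets t n u Q -> coarsening n u N sg w ->
  grounded_sets t N w (fun k => Q (sg k)).
Proof.
  intros HQ Hc. split.
  - intros k Hk. exact (gs_finite HQ _ (crs_index Hc k Hk)).
  - intros k Hk. destruct (gs_anchor HQ _ (crs_index Hc k Hk)) as [e [He He']].
    pose proof (crs_left Hc k Hk). pose proof (crs_right Hc k Hk).
    exists e. split; [exact He | lra].
Qed.

Lemma coarsening_cons {n : nat} {u : nat -> R} {B K N : nat} {sg : nat -> nat}
  {w : nat -> R} :
  increasing_params n u -> (1 <= B)%nat -> (B + K <= n)%nat ->
  coarsening K (fun k => u (B + k)%nat) N sg w ->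
  coarsening n u (S N)
    (fun k => match k with O => O | S k => (B + sg k)%nat end)
    (fun k => match k with O => u O | S k => w k end).
Proof.
  intros Hu HB HBK Hc.
  assert (Hu01 : u 0%nat < u 1%nat) by (apply Hu; lia).
  assert (Hu1B : u 1%nat <= u B) by (apply (params_le Hu); lia).
  assert (HuBw : u B <= w 0%nat)
    by (rewrite <- (Nat.add_0_r B) at 1; exact (crs_first Hc)).
  split.
  - intros [|k] Hk; [lia|]. pose proof (crs_index Hc k ltac:(lia)). lia.
  - lra.
  - pose proof (crs_last Hc).
    assert (u (B + K)%nat <= u n) by (apply (params_le Hu); lia). lra.
  - intros [|k] Hk; [lra|]. apply (crs_incr Hc). lia.
  - intros [|k] Hk; [lra|]. apply (crs_left Hc). lia.
  - intros [|k] Hk; [lra|]. rewrite <- Nat.add_succ_r. apply (crs_right Hc). lia.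
Qed.

Definition mirror (n : nat) (u : nat -> R) : nat -> R := fun k => - u (n - k)%nat.

Lemma increasing_mirror {n : nat} {u : nat -> R} :
  increasing_params n u -> increasing_params n (mirror n u).
Proof.
  intros Hu k Hk. unfold mirror.
  replace (n - k)%nat with (S (n - S k)) by lia.
  assert (u (n - S k)%nat < u (S (n - S k))) by (apply Hu; lia). lra.
Qed.

Lemma grounded_sets_mirror {t n : nat} {u : nat -> R} {Q : nat -> R -> Prop} :
  grounded_sets t n u Q ->
  grounded_sets t n (mirror n u) (fun k p => Q (n - 1 - k)%nat (- p)).
Proof.
  intros HQ. split.
  - intros k Hk. destruct (gs_finite HQ (n - 1 - k)%nat ltac:(lia)) as [L [HL HinL]].
    exists (map Ropp L). split; [rewrite length_map; exact HL|].
    intros p Hp. rewrite <- (Ropp_involutive p). apply in_map, HinL, Hp.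
  - intros k Hk. destruct (gs_anchor HQ (n - 1 - k)%nat ltac:(lia)) as [e [He He']].
    exists (- e). rewrite Ropp_involutive. split; [exact He|]. unfold mirror.
    replace (n - k)%nat with (S (n - 1 - k)) by lia.
    replace (n - S k)%nat with (n - 1 - k)%nat by lia. lra.
Qed.

Lemma coarsening_unmirror {n : nat} {u : nat -> R} {N : nat} {sg : nat -> nat}
  {w : nat -> R} :
  coarsening n (mirror n u) N sg w ->
  coarsening n u N (fun k => n - 1 - sg (N - 1 - k))%nat (mirror N w).
Proof.
  intros Hc.
  assert (Hfirst : - u n <= w 0%nat)
    by (rewrite <- (Nat.sub_0_r n) at 1; exact (crs_first Hc)).
  assert (Hlast : w N <= - u 0%nat)
    by (rewrite <- (Nat.sub_diag n); exact (crs_last Hc)).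
  assert (Hleft : forall j, (j < N)%nat -> w j <= - u (n - sg j)%nat)
    by exact (crs_left Hc).
  assert (Hright : forall j, (j < N)%nat -> - u (n - S (sg j))%nat <= w (S j))
    by exact (crs_right Hc).
  unfold mirror. split.
  - intros k Hk. pose proof (crs_index Hc (N - 1 - k)%nat ltac:(lia)). lia.
  - rewrite Nat.sub_0_r. lra.
  - rewrite Nat.sub_diag. lra.
  - intros k Hk. replace (N - k)%nat with (S (N - S k)) by lia.
    assert (w (N - S k)%nat < w (S (N - S k))) by (apply (crs_incr Hc); lia). lra.
  - intros k Hk. set (j := (N - 1 - k)%nat).
    pose proof (crs_index Hc j ltac:(lia)). pose proof (Hright j ltac:(lia)).
    replace (N - k)%nat with (S j) by lia.
    replace (n - 1 - sg j)%nat with (n - S (sg j))%nat by lia. lra.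
  - intros k Hk. set (j := (N - 1 - k)%nat).
    pose proof (crs_index Hc j ltac:(lia)). pose proof (Hleft j ltac:(lia)).
    replace (N - S k)%nat with j by lia.
    replace (S (n - 1 - sg j)) with (n - sg j)%nat by lia. lra.
Qed.

Definition right_clear (Q : nat -> R -> Prop) (N : nat) (sg : nat -> nat)
  (w : nat -> R) : Prop :=
  forall k, (k < N)%nat -> forall p, Q (sg k) p -> w k <= p <= w N -> p <= w (S k).

Definition left_clear (Q : nat -> R -> Prop) (N : nat) (sg : nat -> nat)
  (w : nat -> R) : Prop :=
  forall k, (k < N)%nat -> forall p, Q (sg k) p -> w 0%nat <= p <= w (S k) -> w k <= p.

Definition separated (Q : nat -> R -> Prop) (N : nat) (sg : nat -> nat)
  (w : nat -> R) : Prop :=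
  forall k, (k < N)%nat -> forall p, Q (sg k) p ->
    w 0%nat <= p <= w N -> w k <= p <= w (S k).

Lemma right_clear_unmirror {n : nat} {Q : nat -> R -> Prop} {N : nat}
  {sg : nat -> nat} {w : nat -> R} :
  right_clear (fun k p => Q (n - 1 - k)%nat (- p)) N sg w ->
  left_clear Q N (fun k => n - 1 - sg (N - 1 - k))%nat (mirror N w).
Proof.
  intros HR k Hk p Hp Hpr. unfold mirror in *. set (j := (N - 1 - k)%nat) in *.
  rewrite Nat.sub_0_r in Hpr. replace (N - S k)%nat with j in Hpr by lia.
  replace (N - k)%nat with (S j) by lia.
  assert (- p <= w (S j)).
  { apply (HR j ltac:(lia)); [rewrite Ropp_involutive; exact Hp | lra]. }
  lra.
Qed.

Lemma right_clear_coarsen {Q : nat -> R -> Prop} {n : nat} {J : nat -> nat}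
  {u : nat -> R} {N : nat} {sg : nat -> nat} {w : nat -> R} :
  right_clear Q n J u -> increasing_params n u -> coarsening n u N sg w ->
  right_clear Q N (fun k => J (sg k)) w.
Proof.
  intros HR Hu Hc k Hk p Hp Hpr.
  destruct (Rle_dec p (w (S k))) as [|Hgt]; [assumption|]. exfalso.
  pose proof (crs_index Hc k Hk) as Hidx.
  pose proof (crs_right Hc k Hk). pose proof (crs_last Hc).
  assert (u (sg k) < u (S (sg k))) by (apply Hu; exact Hidx).
  assert (p <= u (S (sg k))) by (apply (HR _ Hidx p Hp); lra).
  lra.
Qed.

Lemma separated_coarsen {Q : nat -> R -> Prop} {n : nat} {J : nat -> nat}
  {u : nat -> R} {N : nat} {sg : nat -> nat} {w : nat -> R} :
  separated Q n J u -> coarsening n u N sg w ->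
  separated Q N (fun k => J (sg k)) w.
Proof.
  intros HS Hc k Hk p Hp Hpr.
  pose proof (crs_first Hc). pose proof (crs_last Hc).
  pose proof (crs_left Hc k Hk). pose proof (crs_right Hc k Hk).
  assert (u (sg k) <= p <= u (S (sg k))) by (apply (HS _ (crs_index Hc k Hk) p Hp); lra).
  lra.
Qed.

Lemma separated_of_clear (Q : nat -> R -> Prop) (N : nat) (sg : nat -> nat)
  (w : nat -> R) :
  increasing_params N w -> left_clear Q N sg w -> right_clear Q N sg w ->
  separated Q N sg w.
Proof.
  intros Hw HL HR k Hk p Hp Hpr.
  assert (w k < w (S k)) by (apply Hw; exact Hk).
  destruct (Rle_dec (w k) p) as [Hle|Hlt].
  - split; [exact Hle|]. apply (HR k Hk p Hp). lra.
  - exfalso. apply Hlt. apply (HL k Hk p Hp). lra.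
Qed.

(* The pigeonhole step of clear_right: after interval 0, one of t blocks of
   K intervals contains no point of a grounded trace set Q0 of interval 0
   (the anchor lies in interval 0, so at most t-1 points must be avoided). *)
Lemma free_block {t n K : nat} {u : nat -> R} {Q0 : R -> Prop} :
  increasing_params n u -> (1 + t * K <= n)%nat ->
  (exists L : list R, (length L <= t)%nat /\ forall p, Q0 p -> In p L) ->
  (exists e, Q0 e /\ u 0%nat <= e <= u 1%nat) ->
  exists b, (b < t)%nat /\ forall p, Q0 p -> ~ slot u 1 K b p.
Proof.
  intros Hu Hn [Lq [HLq HinLq]] [e [He0 He]].
  assert (Ht : (1 <= t)%nat).
  { pose proof (HinLq e He0) as Hin.
    destruct Lq as [|x Lq']; [destruct Hin | simpl in HLq; lia]. }
  set (Lr := remove Req_EM_T e Lq).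
  assert (HLr : (length Lr <= t - 1)%nat)
    by (unfold Lr; pose proof (remove_length_lt Req_EM_T Lq e (HinLq e He0)); lia).
  destruct (free_slot (t - 1) (fun b x => (b <= t - 1)%nat /\ slot u 1 K b x) Lr)
    as [b [Hb Hfree]]; [|exact HLr|].
  { intros b b' x [Hb1 H1] [Hb2 H2].
    assert (Hroom : (1 + S (t - 1) * K <= n)%nat)
      by (replace (S (t - 1)) with t by lia; exact Hn).
    exact (slots_disjoint Hu Hroom b b' x Hb1 Hb2 H1 H2). }
  exists b. split; [lia|]. intros p Hp Hslot.
  assert (u 1%nat <= u (1 + b * K)%nat) by (apply (params_le Hu); nia).
  apply (Hfree p); [|split; [exact Hb | exact Hslot]].
  apply in_in_remove; [intros ->; destruct Hslot; lra | exact (HinLq p Hp)].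
Qed.

Lemma clear_right (t : nat) : forall (N n : nat) (u : nat -> R) (Q : nat -> R -> Prop),
  (S t ^ N <= n)%nat -> increasing_params n u -> grounded_sets t n u Q ->
  exists sg w, coarsening n u N sg w /\ right_clear Q N sg w.
Proof.
  induction N as [|N IH]; intros n u Q Hn Hu HQ.
  - exists (fun k => k), (fun _ => u 0%nat).
    split; [apply coarsening_nil; exact Hu | intros k Hk; lia].
  - set (K := (S t ^ N)%nat).
    assert (HK : (1 <= K)%nat) by (pose proof (Nat.pow_nonzero (S t) N); lia).
    assert (Hroom : (1 + t * K <= n)%nat)
      by (rewrite Nat.pow_succ_r' in Hn; fold K in Hn; nia).
    destruct (free_block Hu Hroom (gs_finite HQ 0%nat ltac:(lia))
                (gs_anchor HQ 0%nat ltac:(lia))) as [b [Hb Hfree]].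
    set (B := (1 + b * K)%nat).
    assert (HB1 : (1 <= B)%nat) by (unfold B; lia).
    assert (HBK : (B + K <= n)%nat) by (unfold B; nia).
    destruct (IH K (fun k => u (B + k)%nat) (fun k => Q (B + k)%nat) (le_n _)
                (increasing_window Hu HBK) (grounded_sets_window HQ HBK))
      as [sg [w [Hc HR]]].
    exists (fun k => match k with O => O | S k => (B + sg k)%nat end),
           (fun k => match k with O => u O | S k => w k end).
    split; [exact (coarsening_cons Hu HB1 HBK Hc)|].
    intros [|k] Hk p Hp Hpr.
    + (* a trace point of interval 0 beyond u B would lie in the free block *)
      assert (HuBw : u B <= w 0%nat)
        by (rewrite <- (Nat.add_0_r B) at 1; exact (crs_first Hc)).
      pose proof (crs_last Hc).
      destruct (Rle_dec p (u B)) as [Hle|Hgt]; [lra|]. exfalso.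
      apply (Hfree p Hp). unfold slot. fold B. lra.
    + exact (HR k ltac:(lia) p Hp Hpr).
Qed.

Lemma clear_left (t N n : nat) (u : nat -> R) (Q : nat -> R -> Prop) :
  (S t ^ N <= n)%nat -> increasing_params n u -> grounded_sets t n u Q ->
  exists sg w, coarsening n u N sg w /\ left_clear Q N sg w.
Proof.
  intros Hn Hu HQ.
  destruct (clear_right t N n (mirror n u) (fun k p => Q (n - 1 - k)%nat (- p)) Hn
              (increasing_mirror Hu) (grounded_sets_mirror HQ)) as [sg [w [Hc HR]]].
  exists (fun k => n - 1 - sg (N - 1 - k))%nat, (mirror N w).
  split; [exact (coarsening_unmirror Hc) | exact (right_clear_unmirror HR)].
Qed.

Lemma clear_both (t N n : nat) (u : nat -> R) (Q : nat -> R -> Prop) :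
  (S t ^ (S t ^ N) <= n)%nat -> increasing_params n u -> grounded_sets t n u Q ->
  exists sg w, coarsening n u N sg w /\ separated Q N sg w.
Proof.
  intros Hn Hu HQ.
  destruct (clear_right t (S t ^ N) n u Q Hn Hu HQ) as [sg1 [w1 [Hc1 HR1]]].
  destruct (clear_left t N (S t ^ N) w1 (fun k => Q (sg1 k)) (le_n _) (crs_incr Hc1)
              (grounded_sets_coarsen HQ Hc1)) as [sg2 [w2 [Hc2 HL2]]].
  exists (fun k => sg1 (sg2 k)), w2. split; [exact (coarsening_trans Hc1 Hc2)|].
  apply separated_of_clear; [exact (crs_incr Hc2) | exact HL2 |].
  exact (right_clear_coarsen HR1 (crs_incr Hc1) Hc2).
Qed.

Lemma separate_fans {t m : nat} {s : nat -> R} {P : nat -> nat -> R -> Prop} :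
  increasing_params m s ->
  forall l r, (forall i, (i < l)%nat -> grounded_sets t m s (P i)) ->
  (Nat.iter (2 * l) (Nat.pow (S t)) r <= m)%nat ->
  exists J w, coarsening m s r J w /\ forall i, (i < l)%nat -> separated (P i) r J w.
Proof.
  intros Hs l. induction l as [|l IH]; intros r HP Hr.
  - exists (fun k => k), s. split; [exact (coarsening_prefix Hr Hs) | intros i Hi; lia].
  - replace (2 * S l)%nat with (S (S (2 * l))) in Hr by lia.
    rewrite !Nat.iter_succ_r in Hr.
    destruct (IH (S t ^ (S t ^ r))%nat (fun i Hi => HP i ltac:(lia)) Hr)
      as [J [u [Hc HS]]].
    destruct (clear_both t r _ u (fun k => P l (J k)) (le_n _) (crs_incr Hc)
                (grounded_sets_coarsen (HP l ltac:(lia)) Hc)) as [sg [w [Hc' HS']]].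
    exists (fun k => J (sg k)), w. split; [exact (coarsening_trans Hc Hc')|].
    intros i Hi. destruct (Nat.eq_dec i l) as [->|Hne]; [exact HS'|].
    exact (separated_coarsen (HS i ltac:(lia)) Hc').
Qed.

(* In the standard library, ln vanishes on nonpositive arguments. *)
Lemma ln_nonpos {y : R} : y <= 0 -> ln y = 0.
Proof. intros Hy. unfold ln. destruct (Rlt_dec 0 y); [exfalso; lra | reflexivity]. Qed.

Lemma pow_le_of_le_logb (b n : nat) (y : R) :
  (2 <= b)%nat -> (1 <= n)%nat -> INR n <= logb (INR b) y -> INR (b ^ n) <= y.
Proof.
  intros Hb Hn H. unfold logb in H.
  assert (Hb2 : 2 <= INR b) by (apply le_INR in Hb; simpl in Hb; lra).
  assert (Hn1 : 1 <= INR n) by (apply le_INR in Hn; simpl in Hn; lra).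
  assert (Hlb : 0 < ln (INR b)) by (rewrite <- ln_1; apply ln_increasing; lra).
  assert (Hly : INR n * ln (INR b) <= ln y).
  { replace (ln y) with (ln y / ln (INR b) * ln (INR b)) by (field; lra).
    apply Rmult_le_compat_r; lra. }
  assert (Hy : 0 < y).
  { destruct (Rle_dec y 0) as [Hle|]; [|lra].
    rewrite (ln_nonpos Hle) in Hly. nra. }
  rewrite pow_INR, <- Rpower_pow by lra. unfold Rpower.
  rewrite <- (exp_ln y Hy).
  destruct (Rle_lt_or_eq_dec _ _ Hly) as [Hlt|Heq].
  - left. exact (exp_increasing _ _ Hlt).
  - rewrite Heq. lra.
Qed.

Lemma tower_le_of_iter_log (b : nat) :
  (2 <= b)%nat -> forall k n x, (1 <= n)%nat -> INR n <= iter_log (INR b) k x ->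
  INR (Nat.iter k (Nat.pow b) n) <= x.
Proof.
  intros Hb k. induction k as [|k IH]; intros n x Hn H; [exact H|].
  rewrite Nat.iter_succ_r. apply IH.
  - pose proof (Nat.pow_nonzero b n). lia.
  - exact (pow_le_of_le_logb b n _ Hb Hn H).
Qed.

Lemma floor_nat_le {x : R} : floor_nat x <> 0%nat -> INR (floor_nat x) <= x.
Proof.
  unfold floor_nat. intros H. destruct (base_Int_part x) as [Hle _].
  rewrite INR_IZR_INZ, Z2Nat.id by lia. exact Hle.
Qed.

Lemma preimage_list {A B : Type} (D : A -> Prop) (f : A -> B) (Pr : A -> Prop)
  (L : list B) :
  (forall p q, D p -> D q -> f p = f q -> p = q) ->
  (forall p, D p -> Pr p -> In (f p) L) ->
  exists Lp, (length Lp <= length L)%nat /\ forall p, D p -> Pr p -> In p Lp.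
Proof.
  intros Hinj. revert Pr. induction L as [|x L IH]; intros Pr HPr.
  - exists nil. split; [simpl; lia|]. intros p Hp HPp. destruct (HPr p Hp HPp).
  - destruct (classic (exists p0, D p0 /\ Pr p0 /\ f p0 = x))
      as [[p0 [Hp0 [HPp0 Hfp0]]]|Hnone].
    + (* x has the unique preimage p0; the rest comes from L *)
      destruct (IH (fun p => Pr p /\ p <> p0)) as [Lp [Hlen HLp]].
      { intros p Hp [HPp Hne]. destruct (HPr p Hp HPp) as [Hfx|Hin]; [|exact Hin].
        exfalso. apply Hne, Hinj; auto; congruence. }
      exists (p0 :: Lp). split; [simpl; lia|]. intros p Hp HPp.
      destruct (classic (p = p0)) as [->|Hne]; [left; reflexivity | right; auto].
    + destruct (IH Pr) as [Lp [Hlen HLp]].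
      { intros p Hp HPp. destruct (HPr p Hp HPp) as [Hfx|Hin]; [|exact Hin].
        exfalso. apply Hnone. eauto. }
      exists Lp. split; [simpl; lia | exact HLp].
Qed.

Definition trace (g c : curve) (p : R) : Prop := 0 <= p <= 1 /\ curve_pts c 0 1 (g p).

Lemma grounded_fan_traces {t m : nat} {g : curve} {s : nat -> R} (v : R * R)
  {a : nat -> curve} :
  simple_curve g -> s 0%nat = 0 -> s m = 1 -> increasing_params m s ->
  grounded g s m v a ->
  (forall j, (j < m)%nat -> exists L : list (R * R), (length L <= t)%nat /\
     forall x, curve_pts (a j) 0 1 x -> curve_pts g 0 1 x -> In x L) ->
  grounded_sets t m s (fun j => trace g (a j)).
Proof.
  intros [_ [_ Hinj]] Hs0 Hsm Hs [_ Hend] Hcnt. split.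
  - intros j Hj. destruct (Hcnt j Hj) as [L [HL HinL]].
    destruct (preimage_list (fun p => 0 <= p <= 1) g (fun p => curve_pts (a j) 0 1 (g p))
                L Hinj) as [Lp [Hlen HLp]].
    { intros p Hp Hc. apply HinL; [exact Hc | exists p; auto]. }
    exists Lp. split; [lia|]. intros p [Hp Hc]. exact (HLp p Hp Hc).
  - intros j Hj. destruct (Hend j Hj) as [e [He Hge]].
    assert (s 0%nat <= s j) by (apply (params_le Hs); lia).
    assert (s (S j) <= s m) by (apply (params_le Hs); lia).
    exists e. split; [|exact He]. split; [lra|].
    exists 1. split; [lra | symmetry; exact Hge].
Qed.

Lemma piece_nested {g : curve} {m : nat} {s : nat -> R} {r : nat} {J : nat -> nat}
  {w : nat -> R} {k : nat} {x : R * R} :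
  coarsening m s r J w -> (k < r)%nat -> piece g s (J k) x -> piece g w k x.
Proof.
  intros Hc Hk [p [Hp Hgp]].
  pose proof (crs_left Hc k Hk). pose proof (crs_right Hc k Hk).
  exists p. split; [lra | exact Hgp].
Qed.

Lemma well_grounded_of_separated {g : curve} {m : nat} {s : nat -> R} {r : nat}
  {J : nat -> nat} {w : nat -> R} {v : R * R} {c : nat -> curve} :
  s 0%nat = 0 -> s m = 1 -> grounded g s m v c -> coarsening m s r J w ->
  separated (fun j => trace g (c j)) r J w ->
  well_grounded g w r v (fun k => c (J k)).
Proof.
  intros Hs0 Hsm [Hapex Hend] Hc Hsep.
  pose proof (crs_first Hc). pose proof (crs_last Hc).
  split; [split|].
  - intros [p [Hp Hgp]]. apply Hapex. exists p. split; [lra | exact Hgp].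
  - intros k Hk. exact (piece_nested Hc Hk (Hend _ (crs_index Hc k Hk))).
  - intros k Hk x Hx [p [Hp <-]].
    destruct (Hsep k Hk p) as [Hlo Hhi]; [split; [lra | exact Hx] | lra |].
    exists p. split; [lra | reflexivity].
Qed.

Theorem mainTheorem7 :
  forall (t l m : nat) (g : curve) (s : nat -> R)
         (v : nat -> R * R) (a : nat -> nat -> curve),
  (1 <= t)%nat -> (1 <= l)%nat ->
  simple_curve g ->
  s 0%nat = 0 -> s m = 1 -> increasing_params m s ->
  (forall i, (i < l)%nat -> is_fan (v i) m (a i) /\ grounded g s m (v i) (a i)) ->
  (forall i j, (i < l)%nat -> (j < m)%nat ->
     exists L : list (R * R), (length L <= t)%nat /\
       forall x, curve_pts (a i j) 0 1 x -> curve_pts g 0 1 x -> In x L) ->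
  let r := floor_nat (iter_log (INR (t + 1)) (2 * l) (INR m)) in
  exists (J : nat -> nat) (u : nat -> R),
    (forall k, (k < r)%nat -> (J k < m)%nat) /\
    (forall k, (S k < r)%nat -> (J k < J (S k))%nat) /\
    0 <= u 0%nat /\ u r <= 1 /\ increasing_params r u /\
    (forall i, (i < l)%nat -> well_grounded g u r (v i) (fun k => a i (J k))) /\
    (forall k, (k < r)%nat -> forall x, piece g s (J k) x -> piece g u k x).
Proof.
  intros t l m g s v a Ht _ Hg Hs0 Hsm Hs Hfans Hcnt r.
  set (P := fun i j => trace g (a i j)).
  assert (HP : forall i, (i < l)%nat -> grounded_sets t m s (P i)).
  { intros i Hi. apply (grounded_fan_traces (v i) Hg Hs0 Hsm Hs (proj2 (Hfans i Hi))).
    intros j Hj. exact (Hcnt i j Hi Hj). }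
  assert (Hsel : exists J w, coarsening m s r J w /\
                   forall i, (i < l)%nat -> separated (P i) r J w).
  { destruct (Nat.eq_dec r 0) as [Hr0|Hr].
    - rewrite Hr0. exists (fun k => k), (fun _ => s 0%nat).
      split; [exact (coarsening_nil _ Hs) | intros i Hi k Hk; lia].
    - apply (separate_fans Hs l r HP). apply INR_le.
      apply tower_le_of_iter_log; [lia | lia |].
      replace (S t) with (t + 1)%nat by lia. exact (floor_nat_le Hr). }
  destruct Hsel as [J [w [Hc Hsep]]].
  pose proof (crs_first Hc). pose proof (crs_last Hc).
  exists J, w. split; [|split; [|split; [lra|split; [lra|split; [|split]]]]].
  - exact (crs_index Hc).
  - exact (coarsening_index_increasing Hs Hc).
  - exact (crs_incr Hc).
  - intros i Hi.
    exact (well_grounded_of_separated Hs0 Hsm (proj2 (Hfans i Hi)) Hc (Hsep i Hi)).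
  - intros k Hk x. exact (piece_nested Hc Hk).
Qed.
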